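(* Let $\lambda>0$ and let $\mu$, $m$, $g$ be as described below. For all $t$ large enough there exists a unique $\hat\sigma_t\in[0,t)$ such that $(\log g)'(\lambda\hat\sigma_t)=\frac1{\lambda(t-\hat\sigma_t)}$. Furthermore, as $t\to\infty$, $\hat\sigma_t\to\infty$ and $\hat\sigma_t/t\to0$.
   Context: $\mu$ is a probability distribution on $(0,1)$, and $m(x)=-\log\mu((x,1))$ for $x\in[0,1)$ is twice differentiable on $[0,1)$ with $m'(x)>0$ and $m''(x)>0$ for all $x\in[0,1)$, $\lim_{x\uparrow1}m''(x)/(m'(x))^2=0$, there is $\varkappa>0$ with $\lim_{x\uparrow1}m''(x)m(x)x/(m'(x))^2=\varkappa$, and $\lim_{x\uparrow1}m(x)/m'(x)=0$. $g=m^{-1}:[0,\infty)\to[0,1)$ is the inverse function of $m$. *)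

From HB Require Import structures.
From mathcomp Require Import all_boot all_order all_algebra.
From mathcomp Require Import all_classical all_reals all_analysis.
Set Implicit Arguments. Unset Strict Implicit. Unset Printing Implicit Defensive.
Import Order.TTheory GRing.Theory Num.Theory.
Import numFieldNormedType.Exports.
Local Open Scope classical_set_scope.
Local Open Scope ring_scope.

Definition m_of_mu (R : realType) (mu : probability R R) (x : R) : R :=
  - ln (fine (mu `]x, 1[%classic)).

Definition has_deriv_on01 (R : realType) (f f' : R -> R) : Prop :=
  forall x : R, 0 <= x < 1 ->
    (fun h : R => (f (x + h) - f x) / h) @
      (within (fun h : R => h != 0 /\ 0 <= x + h < 1) (nbhs (0 : R)))
      --> f' x.

(* The equation (log g)'(lam * s) = 1 / (lam * (t - s)); log g is only defined
   on (0, +oo) (since g 0 = 0), so we require lam * s > 0. *)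
Definition logg_eq (R : realType) (g : R -> R) (lam t s : R) : Prop :=
  0 < lam * s /\
  is_derive (lam * s) 1 (fun y : R => ln (g y)) (1 / (lam * (t - s))).

(* Since (log g)' = 1 / (g * (m' o g)), the equation for s reads
   t = s + G (lam * s) / lam with G := g * (m' o g).  As g increases and
   m'' > 0, G is positive, continuous and increasing, so the right-hand side
   is an increasing continuous function of s exceeding s: the intermediate
   value theorem and monotonicity give a unique root for large t, and the
   root must tend to +oo with t.  Finally y = m (g y) = o (m' (g y)) because
   m / m' -> 0 at 1, so G is superlinear and t - s = G (lam * s) / lam is
   much larger than s. *)
From HB Require Import structures.
From mathcomp Require Import all_boot all_order all_algebra.
From mathcomp Require Import all_classical all_reals all_analysis.
From mathcomp Require Import lra.
Set Implicit Arguments. Unset Strict Implicit. Unset Printing Implicit Defensive.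
Import Order.TTheory GRing.Theory Num.Theory.
Import numFieldNormedType.Exports.
Local Open Scope classical_set_scope.
Local Open Scope ring_scope.

(* At an interior point the side condition [0 <= x + h < 1] holds for all
   small [h], so the one-sided difference quotient is the usual one. *)
Lemma has_deriv_on01_is_derive (R : realType) (f f' : R -> R) (x : R) :
  has_deriv_on01 f f' -> 0 < x < 1 -> is_derive x 1 f (f' x).
Proof.
move=> df /andP[x0 x1].
have quotE : (fun h : R => h^-1 *: ((f \o shift x) (h *: 1) - f x)) =
             (fun h => (f (x + h) - f x) / h).
  apply/funext => h /=.
  by rewrite -[h%:A]/(h * 1) mulr1 [h + x]addrC -[_ *: _]/(h^-1 * _) mulrC.
have near01 : \forall h \near (0 : R), 0 <= x + h < 1.
  have /nbhs0P : \forall z \near x, z \in `]0, 1[.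
    by apply: near_in_itvoo; rewrite in_itv /= x0 x1.
  by apply: filterS => h; rewrite in_itv /= => /andP[/ltW -> ->].
have dnbhs_within : (0 : R)^' --> within (fun h => h != 0 /\ 0 <= x + h < 1) (nbhs 0).
  move=> P; rewrite !nbhs_simpl /= => AP.
  have {}AP : \forall h \near (0 : R), h != 0 /\ 0 <= x + h < 1 -> P h := AP.
  suff : \forall h \near (0 : R), h != 0 -> P h by [].
  by move: AP near01; apply: filter_app2; apply: filterE => h APh hx h0; exact: APh.
have := df x; rewrite (ltW x0) x1 => /(_ isT) /(cvg_trans (cvg_app _ dnbhs_within)).
by rewrite -quotE => quot_cvg; apply: DeriveDef; [exact: cvgP quot_cvg | exact: cvg_lim].
Qed.

Lemma is_derive1_continuous (R : realType) (f : R -> R) (x d : R) :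
  is_derive x 1 f d -> {for x, continuous f}.
Proof. by move=> [df _]; exact/differentiable_continuous/derivable1_diffP. Qed.

Lemma has_deriv_on01_ltr (R : realType) (f f' : R -> R) :
  has_deriv_on01 f f' -> (forall x, 0 <= x < 1 -> 0 < f' x) ->
  {in `]0, 1[%R &, {homo f : x y / x < y}}.
Proof.
move=> df f'_gt0.
have D (x : R) : x \in `]0, 1[%R -> is_derive x 1 f (f' x).
  by rewrite in_itv; exact: has_deriv_on01_is_derive.
apply: gtr0_derive1_lt_oo => [x /D [] //|x x01|x /[!inE] /D Dx].
- rewrite derive1E; have [_ ->] := D x x01.
  by rewrite f'_gt0 // ltW //; move: x01; rewrite in_itv => /andP[].
- exact: is_derive1_continuous Dx.
Qed.

Definition superlinear (R : realType) (H : R -> R) : Prop :=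
  forall K, 0 < K -> \forall s \near +oo, K * s <= H s.

Lemma superlinear_scale (R : realType) (H : R -> R) (lam : R) : 0 < lam ->
  superlinear H -> superlinear (fun s => H (lam * s) / lam).
Proof.
move=> lam0 H_sup K K0.
have lam_cvgy : lam * s @[s --> +oo] --> +oo.
  apply/cvgryPgt => A; near=> s; rewrite -ltr_pdivrMl //.
  by near: s; exact: nbhs_pinfty_gt (num_real _).
have KH : \forall s \near +oo, K * (lam * s) <= H (lam * s) :=
  lam_cvgy _ (H_sup K K0).
by apply: filterS KH => s; rewrite ler_pdivlMr // mulrAC mulrA.
Unshelve. all: by end_near. Qed.

Section PerturbedIdentity.
Variables (R : realType) (H : R -> R).
Hypothesis H_gt0 : forall s, 0 < s -> 0 < H s.
Hypothesis H_lt : forall s u, 0 < s -> s < u -> H s < H u.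

Lemma addH_lt s u : 0 < s -> s < u -> s + H s < u + H u.
Proof. by move=> s0 su; apply: ltrD => //; exact: H_lt. Qed.

Lemma addH_exists_unique t : (forall s, 0 < s -> {for s, continuous H}) ->
  1 + H 1 <= t -> exists! s, 0 < s /\ s + H s = t.
Proof.
move=> H_cont t_ge; have H10 := H_gt0 ltr01.
have [s] : exists2 s, s \in `[1, t] & s + H s = t.
  apply: IVT; first lra.
    apply: continuous_in_subspaceT => s; rewrite inE /= in_itv /= => /andP[s1 _].
    by apply: continuousD; [exact: cvg_id | apply: H_cont; lra].
  have Ht0 : 0 < H t by apply: H_gt0; lra.
  by rewrite ge_min le_max t_ge lerDl (ltW Ht0) orbT.
rewrite in_itv /= => /andP[s1 _] hs; have s0 : 0 < s by lra.
exists s; split=> [//|u [u0 hu]].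
by have [/(addH_lt s0)|/(addH_lt u0)|//] := ltgtP s u; lra.
Qed.

Variable sig : R -> R.
Hypothesis sig_root : \forall t \near +oo, 0 < sig t /\ sig t + H (sig t) = t.

Lemma addH_root_cvgy : sig t @[t --> +oo] --> +oo.
Proof.
apply/cvgryPgt => A; pose M := Num.max A 1.
have M0 : 0 < M by rewrite lt_max ltr01 orbT.
have AM : A <= M by rewrite le_max lexx.
near=> t; have [s0 st] : 0 < sig t /\ sig t + H (sig t) = t by near: t.
have Mt : M + H M < t by near: t; exact: nbhs_pinfty_gt (num_real _).
apply: le_lt_trans AM _; rewrite ltNge; apply/negP.
rewrite le_eqVlt => /orP[/eqP sM | /(addH_lt s0)]; last lra.
by move: Mt; rewrite -st sM ltxx.
Unshelve. all: by end_near. Qed.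

Lemma addH_root_ratio_cvg0 : superlinear H -> sig t / t @[t --> +oo] --> 0.
Proof.
move=> H_sup; apply/cvgrPdist_lt => e e0.
have ie0 : 0 < e^-1 by rewrite invr_gt0.
have sup := addH_root_cvgy (H_sup _ ie0).
near=> t; have [s0 st] : 0 < sig t /\ sig t + H (sig t) = t by near: t.
have Hs : e^-1 * sig t <= H (sig t) by near: t.
have t0 : 0 < t by rewrite -st; apply: addr_gt0 => //; exact: H_gt0.
rewrite sub0r normrN ger0_norm ?divr_ge0 ?ltW // ltr_pdivrMr //.
rewrite -(ler_pM2l e0) mulrA mulfV ?gt_eqF // mul1r in Hs.
have -> : e * t = e * sig t + e * H (sig t) by rewrite -mulrDr st.
by have es0 := mulr_gt0 e0 s0; lra.
Unshelve. all: by end_near. Qed.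

End PerturbedIdentity.

Section InverseOfIncreasing.
Variables (R : realType) (m m1 m2 g : R -> R).
Implicit Types x y z : R.
Hypothesis m_deriv : has_deriv_on01 m m1.
Hypothesis m1_gt0 : forall x, 0 <= x < 1 -> 0 < m1 x.
Hypothesis m1_deriv : has_deriv_on01 m1 m2.
Hypothesis m2_gt0 : forall x, 0 <= x < 1 -> 0 < m2 x.
Hypothesis m0 : m 0 = 0.
Hypothesis gK : forall y, 0 <= y -> 0 <= g y < 1 /\ m (g y) = y.

Let m_le : {in `]0, 1[%R &, {mono m : x y / x <= y}} :=
  le_mono_in (has_deriv_on01_ltr m_deriv m1_gt0).

Let m_is_derive (x : R) : x \in `]0, 1[%R -> is_derive x 1 m (m1 x).
Proof. by rewrite in_itv; exact: has_deriv_on01_is_derive. Qed.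

Let m1_in_gt0 (x : R) : x \in `]0, 1[%R -> 0 < m1 x.
Proof. by rewrite in_itv => /andP[/ltW x0 x1]; rewrite m1_gt0 // x0. Qed.

Lemma g_in01 y : 0 < y -> g y \in `]0, 1[%R.
Proof.
move=> y0; have [/andP[gy0 gy1] mgy] := gK (ltW y0).
rewrite in_itv /= gy1 andbT lt_neqAle gy0 andbT.
by apply: contraTneq y0 => g0; rewrite -mgy -g0 m0 ltxx.
Qed.

Let g_bounds y : 0 < y -> 0 < g y < 1.
Proof. by move=> /g_in01; rewrite in_itv. Qed.

Lemma g_lt y z : 0 < y -> y < z -> g y < g z.
Proof.
move=> y0 yz; have z0 := lt_trans y0 yz.
by rewrite -(leW_mono_in m_le) ?g_in01 // (gK (ltW y0)).2 (gK (ltW z0)).2.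
Qed.

Lemma g_cvg1 : g y @[y --> +oo] --> (1 : R).
Proof.
apply/cvgrPdist_lt => e e0; pose d := Num.min e 1.
have d0 : 0 < d by rewrite lt_min e0 ltr01.
have d1 : d <= 1 by rewrite ge_min lexx orbT.
have de : d <= e by rewrite ge_min lexx.
have x0_01 : 1 - d / 2 \in `]0, 1[%R by rewrite in_itv /=; apply/andP; split; lra.
near=> y.
have y0 : 0 < y by near: y; exact: nbhs_pinfty_gt (num_real _).
have /andP[_ gy1] := g_bounds y0.
have : 1 - d / 2 < g y.
  rewrite -(leW_mono_in m_le) ?g_in01 // (gK (ltW y0)).2.
  by near: y; exact: nbhs_pinfty_gt (num_real _).
by rewrite ger0_norm ?subr_ge0 ?ltW //; lra.
Unshelve. all: by end_near. Qed.

Lemma is_derive_g y : 0 < y -> is_derive y 1 g (m1 (g y))^-1.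
Proof.
move=> y0; have gy01 := g_in01 y0; have mgy := (gK (ltW y0)).2.
have near01 : \forall x \near g y, x \in `]0, 1[%R := near_in_itvoo gy01.
rewrite -{1}mgy; apply: is_derive_inverse; last 2 first.
- exact: m_is_derive.
- by rewrite gt_eqF // m1_in_gt0.
- have m_gt0 : \forall x \near g y, 0 < m x.
    by apply: (cvgr_gt _ (is_derive1_continuous (m_is_derive gy01))); rewrite mgy.
  near=> x; have mx0 : 0 < m x by near: x.
  apply: (inc_inj_in m_le); rewrite ?g_in01 ?(gK (ltW mx0)).2 //.
  by near: x.
- near=> x; apply: is_derive1_continuous (m_is_derive _).
  by near: x.
Unshelve. all: by end_near. Qed.

Lemma is_derive_ln_g y : 0 < y ->
  is_derive y 1 (fun y => ln (g y)) (g y * m1 (g y))^-1.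
Proof.
move=> y0; have /andP[gy0 _] := g_bounds y0.
by rewrite invfM; exact: is_derive1_comp (is_derive1_ln gy0) (is_derive_g y0).
Qed.

Lemma gm1_gt0 y : 0 < y -> 0 < g y * m1 (g y).
Proof.
by move=> y0; have /andP[gy0 _] := g_bounds y0; rewrite mulr_gt0 ?m1_in_gt0 ?g_in01.
Qed.

Lemma gm1_continuous y : 0 < y -> {for y, continuous (fun y => g y * m1 (g y))}.
Proof.
move=> y0; have g_cont := is_derive1_continuous (is_derive_g y0).
apply: continuousM (g_cont) _; apply: continuous_comp g_cont _.
have := g_in01 y0; rewrite in_itv.
by move=> /(has_deriv_on01_is_derive m1_deriv) /is_derive1_continuous.
Qed.

Lemma gm1_lt y z : 0 < y -> y < z -> g y * m1 (g y) < g z * m1 (g z).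
Proof.
move=> y0 yz; have z0 := lt_trans y0 yz.
have /andP[gy0 _] := g_bounds y0.
apply: ltr_pM; rewrite ?ltW ?m1_in_gt0 ?g_in01 ?g_lt //.
exact: has_deriv_on01_ltr m1_deriv m2_gt0 _ _ (g_in01 y0) (g_in01 z0) (g_lt y0 yz).
Qed.

Lemma logg_eqE lam t s : 0 < lam ->
  logg_eq g lam t s <-> 0 < s /\ s + g (lam * s) * m1 (g (lam * s)) / lam = t.
Proof.
move=> lam0; have [s_le0 | s0] := leP s 0.
  by split=> [[] | []]; rewrite ?pmulr_rgt0 // ltNge s_le0.
have ls0 := mulr_gt0 lam0 s0; have G0 := gm1_gt0 ls0.
have D := is_derive_ln_g ls0.
set G := g (lam * s) * m1 (g (lam * s)) in G0 D *.
have valE : 1 / (lam * (t - s)) = G^-1 <-> s + G / lam = t.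
  rewrite div1r; split => [/invr_inj E | <-].
    by rewrite -E [lam * _]mulrC mulfK ?gt_eqF // addrC subrK.
  by rewrite addrAC subrr add0r [lam * _]mulrC divfK ?gt_eqF.
split => [[_ [_ E]] | [_ /valE E]]; last by split => //; exact: is_derive_eq D (esym E).
by split => //; apply/valE; rewrite -E; case: D.
Qed.

Lemma gm1_superlinear : m x / m1 x @[x --> 1^'-] --> 0 ->
  superlinear (fun y => g y * m1 (g y)).
Proof.
move=> /cvgrPdist_lt ratio0 K K0.
have e0 : 0 < (2 * K)^-1 by rewrite invr_gt0 mulr_gt0.
have ratio_g : \forall y \near +oo,
    g y < 1 -> `|0 - m (g y) / m1 (g y)| < (2 * K)^-1 := g_cvg1 (ratio0 _ e0).
near=> y.
have y0 : 0 < y by near: y; exact: nbhs_pinfty_gt (num_real _).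
have /andP[gy0 gy1] := g_bounds y0.
have gy_half : 2^-1 < g y by near: y; apply: (cvgr_gt _ g_cvg1); lra.
have m1_pos := m1_in_gt0 (g_in01 y0).
have ratio_gy : m (g y) / m1 (g y) < (2 * K)^-1.
  have /(_ gy1) : g y < 1 -> `|0 - m (g y) / m1 (g y)| < (2 * K)^-1 by near: y.
  by rewrite sub0r normrN; apply: le_lt_trans (ler_norm _).
rewrite (gK (ltW y0)).2 ltr_pdivrMr // ltr_pdivlMl ?mulr_gt0 // in ratio_gy.
nra.
Unshelve. all: by end_near. Qed.

End InverseOfIncreasing.

Theorem lemma8 (R : realType) (mu : probability R R) (m1 m2 g : R -> R)
  (kappa lam : R) :
  mu (`]0, 1[%classic : set R) = 1%E ->
  has_deriv_on01 (m_of_mu mu) m1 ->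
  has_deriv_on01 m1 m2 ->
  (forall x : R, 0 <= x < 1 -> 0 < m1 x) ->
  (forall x : R, 0 <= x < 1 -> 0 < m2 x) ->
  m2 x / (m1 x) ^+ 2 @[x --> 1^'-] --> 0 ->
  0 < kappa ->
  m2 x * m_of_mu mu x * x / (m1 x) ^+ 2 @[x --> 1^'-] --> kappa ->
  m_of_mu mu x / m1 x @[x --> 1^'-] --> 0 ->
  (forall y : R, 0 <= y -> 0 <= g y < 1 /\ m_of_mu mu (g y) = y) ->
  0 < lam ->
  (exists T : R, forall t : R, T <= t ->
     exists! s : R, (0 <= s < t) /\ logg_eq g lam t s) /\
  (forall sig : R -> R,
     (\forall t \near +oo, 0 <= sig t < t /\ logg_eq g lam t (sig t)) ->
     sig t @[t --> +oo] --> +oo /\ sig t / t @[t --> +oo] --> 0).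
Proof.
move=> mu01 m_deriv m1_deriv m1_gt0 m2_gt0 _ _ _ ratio0 gK lam0.
have m0 : m_of_mu mu 0 = 0 by rewrite /m_of_mu mu01 /= ln1 oppr0.
have G_gt0 := gm1_gt0 m1_gt0 m0 gK.
have G_lt := gm1_lt m_deriv m1_gt0 m1_deriv m2_gt0 m0 gK.
have G_cont := gm1_continuous m_deriv m1_gt0 m1_deriv m0 gK.
pose H s := g (lam * s) * m1 (g (lam * s)) / lam.
have H_gt0 s : 0 < s -> 0 < H s by move=> s0; rewrite divr_gt0 ?G_gt0 ?mulr_gt0.
have H_lt s u : 0 < s -> s < u -> H s < H u.
  by move=> s0 su; rewrite ltr_pM2r ?invr_gt0 ?G_lt ?mulr_gt0 ?ltr_pM2l.
have H_cont s : 0 < s -> {for s, continuous H}.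
  move=> s0; apply: continuousM; last exact: cvg_cst.
  apply: (continuous_comp (f := fun s => lam * s) (g := fun y => g y * m1 (g y))).
    by apply: continuousM; [exact: cvg_cst | exact: cvg_id].
  by apply: G_cont; rewrite mulr_gt0.
have logg_root t s := logg_eqE m_deriv m1_gt0 m0 gK t s lam0.
split.
  exists (1 + H 1) => t /(addH_exists_unique H_gt0 H_lt H_cont) [s [[s0 st] s_uniq]].
  exists s; split=> [|u [_ /logg_root /s_uniq //]].
  by split; [rewrite (ltW s0) -st ltrDl H_gt0 | exact/logg_root].
move=> sig sig_eq.
have sig_root : \forall t \near +oo, 0 < sig t /\ sig t + H (sig t) = t.
  by apply: filterS sig_eq => t [_ /logg_root].
split; first exact: addH_root_cvgy H_lt _ sig_root.
apply: addH_root_ratio_cvg0 H_gt0 H_lt _ sig_root _.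
exact: superlinear_scale lam0 (gm1_superlinear m_deriv m1_gt0 m0 gK ratio0).
Qed.
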